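(* Let $n\ge2$. The limit set $\Lambda\subset\mathrm{Iso}_2(\mathbb R^{2n},\omega_h)$ associated to $\mathrm{SU}(n-1,1)\subset\mathrm{Sp}(\omega_h)$, namely the set of complex lines $L\subset\mathbb C^n$ with $h|_{L}\equiv0$, viewed as real $2$-planes in $\mathbb R^{2n}$ (a space homeomorphic to $S^{2n-3}$), is maximally antipodal in $\mathrm{Iso}_2(\mathbb R^{2n},\omega_h)$.
   Context: $h(u,v)=\overline u^TQv$ is the Hermitian form on $\mathbb C^n$ of signature $(n-1,1)$ with $Qe_1=e_n$, $Qe_n=e_1$, $Qe_k=e_k$ for $1<k<n$; $\mathrm{SU}(n-1,1)$ is the subgroup of $\mathrm{SL}(n,\mathbb C)$ preserving $h$. $\mathbb C^n$ is identified with $\mathbb R^{2n}$ via $(x_1+iy_1,\dots,x_n+iy_n)\mapsto(x_1,y_1,\dots,x_n,y_n)$, and $\omega_h=\mathrm{Im}\,h$ is a real symplectic form preserved by $\mathrm{SU}(n-1,1)$; $\mathrm{Sp}(\omega_h)$ is its symmetry group. $\mathrm{Iso}_2(\mathbb R^{2n},\omega_h)$ is the space of $\omega_h$-isotropic real $2$-planes; $V,W$ are antipodal iff $V\oplus W^{\perp_{\omega_h}}=\mathbb R^{2n}$. A subset is maximally antipodal if its distinct points are pairwise antipodal and every point of the ambient space is non-antipodal to at least one of its points. ($\Lambda$ is the flag limit set of the rank one subgroup $\mathrm{SU}(n-1,1)$ in $\mathrm{Iso}_2$, equal to the limit set of any uniform lattice of $\mathrm{SU}(n-1,1)$.) *)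

From HB Require Import structures.
From mathcomp Require Import all_boot all_order all_algebra.
From mathcomp Require Import reals.
From mathcomp.real_closed Require Import complex.

Set Implicit Arguments.
Unset Strict Implicit.
Unset Printing Implicit Defensive.

Import Order.TTheory GRing.Theory Num.Theory.
Local Open Scope ring_scope.

Section Defs.
Variables (R : realType) (n : nat).

(* The matrix Q : Q e_1 = e_n, Q e_n = e_1, Q e_k = e_k for 1 < k < n
   (0-based indices: 0 <-> n-1 swapped, others fixed). *)
Definition Qmx : 'M[R[i]]_n :=
  \matrix_(a, b) (if (val a == 0%N) || (val a == n.-1)
                  then (if (val a + val b == n.-1)%N then 1 else 0)
                  else (if a == b then 1 else 0)).

Definition hform (u v : 'rV[R[i]]_n) : R[i] :=
  (map_mx (@conjc R) u *m Qmx *m v^T) 0 0.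

(* Coordinates of R^{2n}: (x_1,y_1,...,x_n,y_n), i.e. real index k*2+j
   (0-based) is Re z_k if j = 0 and Im z_k if j = 1. *)
Lemma ridx_subproof (k : 'I_n) (j : 'I_2) : (k * 2 + j < n * 2)%N.
Proof.
case: k j => k hk [j hj] /=.
apply: (@leq_trans (k.+1 * 2)%N); last by rewrite leq_mul2r hk orbT.
by rewrite mulSn [(2 + _)%N]addnC ltn_add2l.
Qed.

Definition ridx (k : 'I_n) (j : 'I_2) : 'I_(n * 2) := Ordinal (ridx_subproof k j).

Definition cplx (x : 'rV[R]_(n * 2)) : 'rV[R[i]]_n :=
  \row_k (Complex (x 0 (ridx k 0)) (x 0 (ridx k 1))).

Definition omega_h (u v : 'rV[R]_(n * 2)) : R := complex.Im (hform (cplx u) (cplx v)).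

(* A real linear subspace of R^{2n} is represented by a matrix, via its
   row space; membership of x is (x <= V)%MS. *)
Definition isotropic (V : 'M[R]_(n * 2)) : Prop :=
  forall u v : 'rV[R]_(n * 2), (u <= V)%MS -> (v <= V)%MS -> omega_h u v = 0.

(* Iso_2(R^{2n}, omega_h): omega_h-isotropic real 2-planes.
   Two representatives V, W denote the same point iff (V == W)%MS. *)
Definition Iso2 (V : 'M[R]_(n * 2)) : Prop := \rank V = 2%N /\ isotropic V.

Definition in_perp (W : 'M[R]_(n * 2)) (u : 'rV[R]_(n * 2)) : Prop :=
  forall w : 'rV[R]_(n * 2), (w <= W)%MS -> omega_h w u = 0.

Definition antipodal (V W : 'M[R]_(n * 2)) : Prop :=
  (forall x : 'rV[R]_(n * 2), exists v w : 'rV[R]_(n * 2),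
      [/\ (v <= V)%MS, in_perp W w & x = v + w]) /\
  (forall v : 'rV[R]_(n * 2), (v <= V)%MS -> in_perp W v -> v = 0).

Definition maximally_antipodal (S : 'M[R]_(n * 2) -> Prop) : Prop :=
  [/\ (forall V, S V -> Iso2 V),
      (forall V W, S V -> S W -> ~~ (V == W)%MS -> antipodal V W) &
      (forall W, Iso2 W -> exists2 V, S V & ~ antipodal W V)].

Definition Lambda (V : 'M[R]_(n * 2)) : Prop :=
  exists z : 'rV[R[i]]_n,
    [/\ z != 0,
        (forall c c' : R[i], hform (c *: z) (c' *: z) = 0) &
        (forall x : 'rV[R]_(n * 2), (x <= V)%MS <-> exists c : R[i], cplx x = c *: z)].

End Defs.

From HB Require Import structures.
From mathcomp Require Import all_boot all_order all_algebra.
From mathcomp Require Import reals.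
From mathcomp.real_closed Require Import complex.
From mathcomp Require Import ring lra zify.

(* Write N = n'.+2 >= 2 for the complex dimension.  In coordinates
     h(u,v) = conj(u_0) v_(N-1) + conj(u_(N-1)) v_0 + sum_(0<k<N-1) conj(u_k) v_k,
   so h has signature (N-1,1): the hyperplane u_(N-1) = u_0, h-orthogonal to
   the negative vector e_0 - e_(N-1), is positive definite.  On an isotropic real plane W the form h is real, so by
     the NullVectors facts W contains x <> 0 with h(z,x) = 0 for some null
     z <> 0: W meets the omega_h-orthogonal of C z, hence is not antipodal
     to it. *)

Set Implicit Arguments.
Unset Strict Implicit.
Unset Printing Implicit Defensive.

Import Order.TTheory GRing.Theory Num.Theory.
Local Open Scope ring_scope.
Local Open Scope complex_scope.

Section ComplexArith.
Variable R : realType.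
Local Notation C := R[i].
Local Notation Re := (@complex.Re R).
Local Notation Im := (@complex.Im R).

Lemma ReD (x y : C) : Re (x + y) = Re x + Re y. Proof. by case: x; case: y. Qed.
Lemma ImD (x y : C) : Im (x + y) = Im x + Im y. Proof. by case: x; case: y. Qed.
Lemma ReM (x y : C) : Re (x * y) = Re x * Re y - Im x * Im y.
Proof. by case: x; case: y. Qed.
Lemma ImM (x y : C) : Im (x * y) = Re x * Im y + Im x * Re y.
Proof. by case: x => a b; case: y => c d /=; ring. Qed.
Lemma Re_conj (x : C) : Re (conjc x) = Re x. Proof. by case: x. Qed.
Lemma Im_conj (x : C) : Im (conjc x) = - Im x. Proof. by case: x. Qed.

(* Conjugation as a ring morphism, stated on conjc itself for rewriting. *)
Lemma conjcM (x y : C) : conjc (x * y) = conjc x * conjc y. Proof. exact: rmorphM. Qed.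
Lemma conjcN (x : C) : conjc (- x) = - conjc x. Proof. exact: rmorphN. Qed.
Lemma conjcB (x y : C) : conjc (x - y) = conjc x - conjc y. Proof. exact: rmorphB. Qed.

Lemma complex_ext (x y : C) : Re x = Re y -> Im x = Im y -> x = y.
Proof. by case: x; case: y => /= ? ? ? ? -> ->. Qed.

Lemma complex_Im0 (x : C) : Im x = 0 -> x = (Re x)%:C.
Proof. by move=> h; apply: complex_ext. Qed.

Lemma conj_mul_self (x : C) : conjc x * x = (Re x ^+ 2 + Im x ^+ 2)%:C.
Proof. by apply: complex_ext; rewrite ?ReM ?ImM ?Re_conj ?Im_conj /=; ring. Qed.

Lemma Re_conj_mul_ge0 (x : C) : 0 <= Re (conjc x * x).
Proof. by rewrite conj_mul_self /= addr_ge0 ?sqr_ge0. Qed.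

Lemma Re_conj_mul_eq0 (x : C) : Re (conjc x * x) = 0 -> x = 0.
Proof.
rewrite conj_mul_self /= => h.
by apply: complex_ext => /=; nra.
Qed.

Lemma Re_sum I (r : seq I) (P : pred I) (F : I -> C) :
  Re (\sum_(i <- r | P i) F i) = \sum_(i <- r | P i) Re (F i).
Proof. by elim/big_rec2: _ => // i y1 y2 _ <-; rewrite ReD. Qed.

Lemma Im_sum I (r : seq I) (P : pred I) (F : I -> C) :
  Im (\sum_(i <- r | P i) F i) = \sum_(i <- r | P i) Im (F i).
Proof. by elim/big_rec2: _ => // i y1 y2 _ <-; rewrite ImD. Qed.

End ComplexArith.

Section HermitianForm.
Variables (R : realType) (n : nat).
Local Notation C := R[i].
Local Notation Re := (@complex.Re R).
Local Notation Im := (@complex.Im R).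
Local Notation h := (@hform R n).

Definition qswap (a : 'I_n) : 'I_n :=
  if (val a == 0%N) || (val a == n.-1) then rev_ord a else a.

Lemma qswapK : involutive qswap.
Proof.
move=> a; rewrite {2}/qswap; case: ifP => ha; last by rewrite /qswap ha.
rewrite /qswap ifT ?rev_ordK //=; have := ltn_ord a.
case/orP: ha => /eqP /= ha hlt; apply/orP; [right|left]; apply/eqP; lia.
Qed.

Lemma QmxE (a j : 'I_n) : Qmx R n a j = (j == qswap a)%:R.
Proof.
rewrite /Qmx /qswap mxE /=; case: ifP => _; last by rewrite eq_sym; case: (j == a).
have := ltn_ord a; have := ltn_ord j => hj ha.
suff -> : ((a + j)%N == n.-1) = (j == rev_ord a) by case: (j == rev_ord a).
by apply/eqP/eqP => [e|->]; [apply: val_inj => /=|]; rewrite /=; lia.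
Qed.

Lemma hformE (u v : 'rV[C]_n) : h u v = \sum_a conjc (u 0 a) * v 0 (qswap a).
Proof.
rewrite /hform mxE.
under eq_bigr => j _ do rewrite !mxE big_distrl /=.
rewrite exchange_big /=; apply: eq_bigr => a _.
rewrite (bigD1 (qswap a)) //= big1 ?addr0.
  by rewrite QmxE eqxx mulr1 mxE.
by move=> j /negbTE hj; rewrite QmxE hj mulr0 mul0r.
Qed.

Lemma hDl (u u' v : 'rV[C]_n) : h (u + u') v = h u v + h u' v.
Proof.
by rewrite !hformE -big_split; apply: eq_bigr => a _; rewrite !mxE rmorphD mulrDl.
Qed.

Lemma hDr (u v v' : 'rV[C]_n) : h u (v + v') = h u v + h u v'.
Proof. by rewrite !hformE -big_split; apply: eq_bigr => a _; rewrite !mxE mulrDr. Qed.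

Lemma hZl (c : C) (u v : 'rV[C]_n) : h (c *: u) v = conjc c * h u v.
Proof.
by rewrite !hformE big_distrr; apply: eq_bigr => a _; rewrite !mxE rmorphM -mulrA.
Qed.

Lemma hZr (c : C) (u v : 'rV[C]_n) : h u (c *: v) = c * h u v.
Proof. by rewrite !hformE big_distrr; apply: eq_bigr => a _; rewrite !mxE mulrCA. Qed.

Lemma hBl (u u' v : 'rV[C]_n) : h (u - u') v = h u v - h u' v.
Proof. by rewrite -scaleN1r hDl hZl rmorphN1 mulN1r. Qed.

Lemma hBr (u v v' : 'rV[C]_n) : h u (v - v') = h u v - h u v'.
Proof. by rewrite -scaleN1r hDr hZr mulN1r. Qed.

Lemma hC (u v : 'rV[C]_n) : h v u = conjc (h u v).
Proof.
rewrite !hformE rmorph_sum (reindex_inj (can_inj qswapK)) /=.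
by apply: eq_bigr => a _; rewrite qswapK rmorphM /= conjcK mulrC.
Qed.

Lemma hself_real (u : 'rV[C]_n) : h u u = (Re (h u u))%:C.
Proof.
apply: complex_Im0; have := congr1 Im (hC u u).
by rewrite Im_conj => e; lra.
Qed.

Lemma hself_comb (Y1 Y2 : 'rV[C]_n) (r s : R) : Im (h Y1 Y2) = 0 ->
  h (r%:C *: Y1 + s%:C *: Y2) (r%:C *: Y1 + s%:C *: Y2) =
  (r ^+ 2 * Re (h Y1 Y1) + 2 * r * s * Re (h Y1 Y2) + s ^+ 2 * Re (h Y2 Y2))%:C.
Proof.
move=> hi; rewrite !hDl !hDr !hZl !hZr (hself_real Y1) (hself_real Y2).
rewrite (hC Y1 Y2) (complex_Im0 hi) !conjc_real.
move: (Re (h Y1 Y1)) (Re (h Y1 Y2)) (Re (h Y2 Y2)) => A B D.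
by apply: complex_ext => /=; ring.
Qed.

Lemma Re_hself_cross (Y1 Y2 : 'rV[C]_n) (a b : C) : Im (h Y1 Y2) = 0 ->
  Re (h (b *: Y1 - a *: Y2) (b *: Y1 - a *: Y2)) =
  (Re b ^+ 2 + Im b ^+ 2) * Re (h Y1 Y1)
  - 2 * Re (h Y1 Y2) * (Re b * Re a + Im b * Im a)
  + (Re a ^+ 2 + Im a ^+ 2) * Re (h Y2 Y2).
Proof.
move=> hi; rewrite hBl !hBr !hZl !hZr (hself_real Y1) (hself_real Y2).
rewrite (hC Y1 Y2) (complex_Im0 hi) conjc_real.
move: (Re (h Y1 Y1)) (Re (h Y1 Y2)) (Re (h Y2 Y2)) => A B D.
by case: a => ? ?; case: b => ? ? /=; ring.
Qed.

End HermitianForm.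

(* For N >= 2 the form splits into the hyperbolic pair of coordinates 0, N-1
   and the positive definite block of the "middle" coordinates. *)
Section SignatureFacts.
Variables (R : realType) (n' : nat).
Local Notation N := n'.+2.
Local Notation C := R[i].
Local Notation Re := (@complex.Re R).
Local Notation h := (@hform R N).

Definition mid (k : 'I_N) : bool := (k != ord0) && (k != ord_max).

Definition mid_norm (u : 'rV[C]_N) : C := \sum_(k | mid k) conjc (u 0 k) * u 0 k.

Lemma qswap_mid (k : 'I_N) : mid k -> qswap k = k.
Proof.
rewrite /mid -!(inj_eq val_inj) /= => /andP [h0 hm].
by rewrite /qswap ifF //= (negbTE h0) (negbTE hm).
Qed.

Lemma hsplit (u v : 'rV[C]_N) : h u v =
  conjc (u 0 ord0) * v 0 ord_max + conjc (u 0 ord_max) * v 0 ord0 +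
  \sum_(k | mid k) conjc (u 0 k) * v 0 k.
Proof.
rewrite hformE (bigD1 ord0) //= (bigD1 ord_max) //= addrA.
have -> : qswap (ord0 : 'I_N) = ord_max by apply: val_inj; rewrite /= subn1.
have -> : qswap (ord_max : 'I_N) = ord0 by apply: val_inj; rewrite /qswap /= eqxx /= subnn.
by congr (_ + _); apply: eq_bigr => k /qswap_mid ->.
Qed.

Lemma mid_norm_real (u : 'rV[C]_N) : mid_norm u = (Re (mid_norm u))%:C.
Proof. by apply: complex_Im0; rewrite Im_sum big1 // => k _; rewrite conj_mul_self. Qed.

Lemma Re_mid_norm_ge0 (u : 'rV[C]_N) : 0 <= Re (mid_norm u).
Proof. by rewrite Re_sum sumr_ge0 // => k _; apply: Re_conj_mul_ge0. Qed.

Lemma Re_mid_norm_eq0 (u : 'rV[C]_N) :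
  Re (mid_norm u) = 0 -> forall k, mid k -> u 0 k = 0.
Proof.
move=> H k hk; apply: Re_conj_mul_eq0; move: k hk.
by apply: psumr_eq0P => [k _|]; [apply: Re_conj_mul_ge0 | rewrite -Re_sum].
Qed.

Lemma ord_cases (k : 'I_N) : [\/ k = ord0, k = ord_max | mid k].
Proof.
rewrite /mid; case: eqP => [->|_]; first by constructor 1.
by case: eqP => [->|_]; [constructor 2|constructor 3].
Qed.

Lemma hself_ge0_sym (u : 'rV[C]_N) : u 0 ord_max = u 0 ord0 -> 0 <= Re (h u u).
Proof.
move=> e; rewrite hsplit e !ReD -/(mid_norm u).
by have := Re_conj_mul_ge0 (u 0 ord0); have := Re_mid_norm_ge0 u; lra.
Qed.

Lemma hself_eq0_sym (u : 'rV[C]_N) :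
  u 0 ord_max = u 0 ord0 -> Re (h u u) = 0 -> u = 0.
Proof.
move=> e; rewrite hsplit e !ReD -/(mid_norm u) => H.
have h1 := Re_conj_mul_ge0 (u 0 ord0); have h2 := Re_mid_norm_ge0 u.
have a0 : u 0 ord0 = 0 by apply: Re_conj_mul_eq0; lra.
have s0 := @Re_mid_norm_eq0 u ltac:(lra).
by apply/rowP => k; rewrite mxE; case: (ord_cases k) => [->|->|/s0 //]; rewrite ?e.
Qed.

Lemma hself_le0_asym (u : 'rV[C]_N) :
  n' = 0%N -> u 0 ord_max = - u 0 ord0 -> Re (h u u) <= 0.
Proof.
move=> en e; rewrite hsplit e big_pred0; last first.
  move=> k; rewrite /mid -!(inj_eq val_inj) /=.
  by apply/negbTE/andP => -[/eqP h0 /eqP hm]; have := ltn_ord k; lia.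
rewrite addr0 rmorphN mulNr mulrN !ReD /=.
by have := Re_conj_mul_ge0 (u 0 ord0); lra.
Qed.

End SignatureFacts.

Section RealQuadratics.
Variable R : realType.

Lemma quad_isotropic (A B D : R) : A * D <= B ^+ 2 ->
  exists r s : R, ((r != 0) || (s != 0)) /\ r ^+ 2 * A + 2 * r * s * B + s ^+ 2 * D = 0.
Proof.
move=> hD; have [A0|Anz] := eqVneq A 0.
  by exists 1, 0; rewrite oner_eq0 A0; split => //; ring.
pose S := Num.sqrt (B ^+ 2 - A * D).
have hS : S ^+ 2 = B ^+ 2 - A * D by rewrite sqr_sqrtr // subr_ge0.
exists ((S - B) / A), 1; rewrite oner_eq0 orbT; split => //.
transitivity ((S ^+ 2 - B ^+ 2 + A * D) / A); first by field.
by rewrite hS (_ : B ^+ 2 - A * D - B ^+ 2 + A * D = 0) ?mul0r //; ring.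
Qed.

(* If the discriminant A D - B^2 is positive, the Hermitian extension
   (a, b) |-> |b|^2 A - 2 B Re(b conj a) + |a|^2 D of the form is definite:
   A times it can only be nonpositive at a = 0. *)
Lemma gram_definite (A B D ar ai br bi : R) : 0 < A * D - B ^+ 2 ->
  A * ((br ^+ 2 + bi ^+ 2) * A - 2 * B * (br * ar + bi * ai)
       + (ar ^+ 2 + ai ^+ 2) * D) <= 0 ->
  ar = 0 /\ ai = 0.
Proof.
move=> hD hQ.
have E : A * ((br ^+ 2 + bi ^+ 2) * A - 2 * B * (br * ar + bi * ai)
              + (ar ^+ 2 + ai ^+ 2) * D)
  = (A * br - B * ar) ^+ 2 + (A * bi - B * ai) ^+ 2
    + (A * D - B ^+ 2) * (ar ^+ 2 + ai ^+ 2) by ring.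
rewrite E in hQ.
have h1 := sqr_ge0 (A * br - B * ar); have h2 := sqr_ge0 (A * bi - B * ai).
have h3 : ar ^+ 2 + ai ^+ 2 <= 0 by rewrite -(pmulr_rle0 _ hD); lra.
have g1 := sqr_ge0 ar; have g2 := sqr_ge0 ai.
by split; apply/eqP; rewrite -sqrf_eq0; apply/eqP; lra.
Qed.

(* The coefficient t of the null vector built in [null_orth_spread]:
   t = M / (M + sqrt(M P)) is a root of the quadratic below. *)
Lemma spread_coeff (M P : R) : 0 < M -> 0 <= P ->
  exists t, M - 2 * M * t - t ^+ 2 * (P - M) = 0.
Proof.
move=> Mp Pge; pose S := Num.sqrt (M * P).
have S0 : 0 <= S := sqrtr_ge0 _.
have hS : S ^+ 2 = M * P by rewrite sqr_sqrtr // mulr_ge0 //; lra.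
have MS0 : M + S != 0 by apply: lt0r_neq0; lra.
have [t ht] : exists t, t * (M + S) = M by exists (M / (M + S)); rewrite divfK.
exists t; have : (M - 2 * M * t - t ^+ 2 * (P - M)) * (M + S) ^+ 2 = 0.
  transitivity (M * (M + S) ^+ 2 - 2 * M * (t * (M + S)) * (M + S)
     - (t * (M + S)) ^+ 2 * (P - M)); first by ring.
  rewrite ht; transitivity (M * (S ^+ 2 - M * P)); first by ring.
  by rewrite hS subrr mulr0.
by move/eqP; rewrite mulf_eq0 expf_eq0 (negbTE MS0) andbF orbF => /eqP.
Qed.

End RealQuadratics.

Section NullVectors.
Variables (R : realType) (n' : nat).
Local Notation N := n'.+2.
Local Notation C := R[i].
Local Notation Re := (@complex.Re R).
Local Notation Im := (@complex.Im R).
Local Notation h := (@hform R N).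

(* Orthogonal null vectors are proportional: b z - a w, with a, b the values
   of u |-> u_(N-1) - u_0 on z, w, is a null vector of the positive definite
   hyperplane, hence zero. *)
Lemma null_orth_dep (z w : 'rV[C]_N) : z != 0 -> h z z = 0 -> h w w = 0 ->
  h w z = 0 -> exists k, w = k *: z.
Proof.
move=> nz hz hw hwz; have hzw : h z w = 0 by rewrite hC hwz rmorph0.
set a := z 0 ord_max - z 0 ord0; set b := w 0 ord_max - w 0 ord0.
have u0 : b *: z - a *: w = 0.
  apply: hself_eq0_sym; first by rewrite !mxE /a /b; ring.
  by rewrite hBl !hBr !hZl !hZr hz hw hzw hwz !mulr0 !subrr.
have [a0|anz] := eqVneq a 0.
  case/negP: nz; apply/eqP; apply: hself_eq0_sym; last by rewrite hz.
  by apply/eqP; rewrite -subr_eq0 -/a a0.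
exists (a^-1 * b); move/eqP: u0; rewrite subr_eq0 => /eqP e.
by rewrite -scalerA e scalerA mulVf // scale1r.
Qed.

(* A real plane with real Gram matrix [A B; B D] and A < 0 has nonnegative
   discriminant: otherwise it would be negative definite and would meet the
   positive definite hyperplane u_(N-1) = u_0 nontrivially. *)
Lemma gram_disc_neg (Y1 Y2 : 'rV[C]_N) : Im (h Y1 Y2) = 0 -> Re (h Y1 Y1) < 0 ->
  Re (h Y1 Y1) * Re (h Y2 Y2) <= Re (h Y1 Y2) ^+ 2.
Proof.
move=> hi hA; rewrite leNgt; apply/negP; rewrite -subr_gt0 => hD.
set a := Y1 0 ord_max - Y1 0 ord0; set b := Y2 0 ord_max - Y2 0 ord0.
have hu : 0 <= Re (h (b *: Y1 - a *: Y2) (b *: Y1 - a *: Y2)).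
  by apply: hself_ge0_sym; rewrite !mxE /a /b; ring.
rewrite Re_hself_cross // in hu.
have [ar ai] : Re a = 0 /\ Im a = 0.
  by apply: (gram_definite (D := Re (h Y2 Y2)) (br := Re b) (bi := Im b) hD); nra.
have a0 : a = 0 by apply: complex_ext.
have := @hself_ge0_sym _ _ Y1; rewrite (_ : Y1 0 ord_max = Y1 0 ord0).
  by move=> /(_ erefl); lra.
by apply/eqP; rewrite -subr_eq0 -/a a0.
Qed.

(* For N = 2 the same holds when A > 0, using the negative line
   u_1 = - u_0: a 2-space of signature (1,1) has no positive definite
   real plane. *)
Lemma gram_disc_pos2 (Y1 Y2 : 'rV[C]_N) : n' = 0%N -> Im (h Y1 Y2) = 0 ->
  0 < Re (h Y1 Y1) -> Re (h Y1 Y1) * Re (h Y2 Y2) <= Re (h Y1 Y2) ^+ 2.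
Proof.
move=> en hi hA; rewrite leNgt; apply/negP; rewrite -subr_gt0 => hD.
set a := Y1 0 ord_max + Y1 0 ord0; set b := Y2 0 ord_max + Y2 0 ord0.
have hu : Re (h (b *: Y1 - a *: Y2) (b *: Y1 - a *: Y2)) <= 0.
  by apply: hself_le0_asym => //; rewrite !mxE /a /b; ring.
rewrite Re_hself_cross // in hu.
have [ar ai] : Re a = 0 /\ Im a = 0.
  by apply: (gram_definite (D := Re (h Y2 Y2)) (br := Re b) (bi := Im b) hD); nra.
have a0 : a = 0 by apply: complex_ext.
have := hself_le0_asym (u := Y1) en; rewrite (_ : Y1 0 ord_max = - Y1 0 ord0).
  by move=> /(_ erefl); lra.
by apply/eqP; rewrite -subr_eq0 opprK -/a a0.
Qed.

Definition mkv (x y : C) (f : 'I_N -> C) : 'rV[C]_N :=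
  \row_k (if k == ord0 then x else if k == ord_max then y else f k).

Lemma mkv0 x y f : mkv x y f 0 ord0 = x. Proof. by rewrite mxE eqxx. Qed.

Lemma mkvmid x y f k : mid k -> mkv x y f 0 k = f k.
Proof. by case/andP => h0 hm; rewrite mxE (negbTE h0) (negbTE hm). Qed.

Lemma h_mkv_l x y f u : h (mkv x y f) u =
  conjc x * u 0 ord_max + conjc y * u 0 ord0 + \sum_(k | mid k) conjc (f k) * u 0 k.
Proof.
have max_neq0 : (ord_max : 'I_N) != ord0 by apply/eqP => /(congr1 val).
rewrite hsplit mkv0 mxE (negbTE max_neq0) eqxx; congr (_ + _).
by apply: eq_bigr => k mk; rewrite mkvmid.
Qed.

Lemma h_mkv x y f x' y' f' : h (mkv x y f) (mkv x' y' f') =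
  conjc x * y' + conjc y * x' + \sum_(k | mid k) conjc (f k) * f' k.
Proof.
have max_neq0 : (ord_max : 'I_N) != ord0 by apply/eqP => /(congr1 val).
rewrite h_mkv_l mkv0 mxE (negbTE max_neq0) eqxx; congr (_ + _).
by apply: eq_bigr => k mk; rewrite mkvmid.
Qed.

(* N >= 3, v positive with vanishing middle part: the vector
   (conj v_0, - conj v_(N-1), sqrt(h(v,v)) e_1) is null and orthogonal to v. *)
Lemma null_orth_flat (v : 'rV[C]_N) : (1 <= n')%N -> 0 < Re (h v v) ->
  Re (mid_norm v) = 0 -> exists z, [/\ z != 0, h z z = 0 & h z v = 0].
Proof.
move=> hn hP M0; set a := v 0 ord0; set b := v 0 ord_max; set P := Re (h v v).
have hvv : P%:C = conjc a * b + conjc b * a.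
  by rewrite -hself_real hsplit -/(mid_norm v) mid_norm_real M0 addr0.
have vmid0 := Re_mid_norm_eq0 M0.
pose i1 : 'I_N := inord 1.
have mi1 : mid i1.
  by rewrite /mid -!(inj_eq val_inj) /= inordK //; apply/andP; split; apply/eqP; lia.
have sqP : (Num.sqrt P)%:C * (Num.sqrt P)%:C = P%:C.
  by rewrite -rmorphM -expr2 sqr_sqrtr // ltW.
pose z := mkv (conjc a) (- conjc b) (fun k => if k == i1 then (Num.sqrt P)%:C else 0).
exists z; split.
- apply/eqP => /(congr1 (fun w : 'rV[C]_N => Re (w 0 i1))).
  by rewrite mkvmid // eqxx mxE /=; apply/eqP; rewrite gt_eqF // sqrtr_gt0.
- rewrite h_mkv (bigD1 i1) //= eqxx big1 ?addr0; last first.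
    by move=> k /andP [_ /negbTE ->]; rewrite rmorph0 mul0r.
  by rewrite conjc_real sqP hvv conjcN !conjcK; ring.
- rewrite h_mkv_l big1 ?addr0; last by move=> k mk; rewrite vmid0 // mulr0.
  by rewrite conjcN !conjcK -/a -/b; ring.
Qed.

(* v positive with nonzero middle part M = sum |v_k|^2: with t a root of
   M - 2 M t - t^2 (h(v,v) - M), the vector
   (- M - t v_(N-1) conj v_0, t |v_(N-1)|^2, conj(v_(N-1)) v_mid)
   is null and orthogonal to v. *)
Lemma null_orth_spread (v : 'rV[C]_N) : 0 < Re (h v v) -> 0 < Re (mid_norm v) ->
  exists z, [/\ z != 0, h z z = 0 & h z v = 0].
Proof.
move=> hP Mp; set a := v 0 ord0; set b := v 0 ord_max.
set M := Re (mid_norm v); set P := Re (h v v).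
have eMs : mid_norm v = M%:C := mid_norm_real v.
have hR : conjc a * b + conjc b * a = P%:C - M%:C.
  by rewrite -eMs -hself_real hsplit -/(mid_norm v) -/a -/b; ring.
have [t key] := spread_coeff Mp (ltW hP).
have keyC : M%:C - 2 * M%:C * t%:C - t%:C ^+ 2 * (P%:C - M%:C) = 0.
  have := congr1 (real_complex R) key.
  rewrite !rmorphB !rmorphM rmorph_nat /= => e.
  by rewrite -[RHS](_ : 0%:C = 0) // -e; ring.
pose z := mkv (- M%:C - t%:C * b * conjc a) (t%:C * b * conjc b)
              (fun k => conjc b * v 0 k).
exists z; split.
- apply/eqP => z0; have [b0|bnz] := eqVneq b 0.
    have := congr1 (fun w : 'rV[C]_N => Re (w 0 ord0)) z0.
    by rewrite /= mkv0 mxE b0 mulr0 mul0r subr0 /=; lra.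
  suff : M = 0 by lra.
  rewrite /M /mid_norm big1 // => k mk.
  have := congr1 (fun w : 'rV[C]_N => w 0 k) z0; rewrite /= mkvmid // mxE.
  by move/eqP; rewrite mulf_eq0 conjc_eq0 (negbTE bnz) /= => /eqP ->; rewrite mulr0.
- rewrite h_mkv (eq_bigr (fun k => (b * conjc b) * (conjc (v 0 k) * v 0 k))); last first.
    by move=> k _; rewrite conjcM conjcK; ring.
  rewrite -big_distrr /= -/(mid_norm v) eMs !(conjcB, conjcN, conjcM, conjcK, conjc_real).
  transitivity (b * conjc b * (M%:C - 2 * M%:C * t%:C
                  - t%:C ^+ 2 * (conjc a * b + conjc b * a))); first by ring.
  by rewrite hR keyC mulr0.
- rewrite h_mkv_l (eq_bigr (fun k => b * (conjc (v 0 k) * v 0 k))); last first.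
    by move=> k _; rewrite conjcM conjcK mulrA.
  rewrite -big_distrr /= -/(mid_norm v) eMs.
  by rewrite !(conjcB, conjcN, conjcM, conjcK, conjc_real) -/a -/b; ring.
Qed.

Lemma null_orth_pos (v : 'rV[C]_N) : (1 <= n')%N -> 0 < Re (h v v) ->
  exists z, [/\ z != 0, h z z = 0 & h z v = 0].
Proof.
move=> hn hP; have [M0|Mp] := eqVneq (Re (mid_norm v)) 0.
  exact: null_orth_flat.
by apply: null_orth_spread; rewrite // lt_def Mp Re_mid_norm_ge0.
Qed.

End NullVectors.

Section Realification.
Variables (R : realType) (n : nat).
Local Notation C := R[i].
Local Notation Re := (@complex.Re R).
Local Notation Im := (@complex.Im R).
Local Notation cplx := (@cplx R n).

Lemma cidx_subproof (j : 'I_(n * 2)) : (j %/ 2 < n)%N.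
Proof. by rewrite ltn_divLR. Qed.

Definition cidx (j : 'I_(n * 2)) : 'I_n := Ordinal (cidx_subproof j).

Definition realify (y : 'rV[C]_n) : 'rV[R]_(n * 2) :=
  \row_j (if odd j then Im (y 0 (cidx j)) else Re (y 0 (cidx j))).

Lemma cidx_ridx (k : 'I_n) (e : 'I_2) : cidx (ridx k e) = k.
Proof. by apply: val_inj; rewrite /= divnMDl // divn_small ?addn0. Qed.

Lemma odd_ridx (k : 'I_n) (e : 'I_2) : odd (ridx k e) = (val e == 1%N).
Proof. by case: e => [[|[|e]] he] //=; rewrite ?addn0 ?oddD oddM //= andbF. Qed.

Lemma ridx_cidx (j : 'I_(n * 2)) : ridx (cidx j) (if odd j then 1 else 0) = j.
Proof.
apply: val_inj; rewrite /=; have e := divn_eq j 2; rewrite modn2 in e.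
by case: (odd j) e => /= e; lia.
Qed.

Lemma cplxK (y : 'rV[C]_n) : cplx (realify y) = y.
Proof.
apply/rowP => k; rewrite !mxE !odd_ridx !cidx_ridx /=.
by case: (y 0 k).
Qed.

Lemma realifyK (x : 'rV[R]_(n * 2)) : realify (cplx x) = x.
Proof. by apply/rowP => j; rewrite !mxE /=; case: ifP => o; rewrite -[in RHS](ridx_cidx j) o. Qed.

Lemma cplx_inj : injective cplx.
Proof. by move=> x y e; rewrite -(realifyK x) -(realifyK y) e. Qed.

Lemma cplxD (x y : 'rV[R]_(n * 2)) : cplx (x + y) = cplx x + cplx y.
Proof. by apply/rowP => k; rewrite !mxE; apply: complex_ext; rewrite ?ReD ?ImD /= ?mxE. Qed.

Lemma cplxZ (r : R) (x : 'rV[R]_(n * 2)) : cplx (r *: x) = r%:C *: cplx x.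
Proof. by apply/rowP => k; rewrite !mxE; apply: complex_ext; rewrite ?ReM ?ImM /= ?mxE; ring. Qed.

Lemma cplxB (x y : 'rV[R]_(n * 2)) : cplx (x - y) = cplx x - cplx y.
Proof. by rewrite cplxD -scaleN1r cplxZ -scaleN1r rmorphN1. Qed.

Lemma cplx0 : cplx 0 = 0.
Proof. by rewrite -(scale0r (0 : 'rV[R]_(n * 2))) cplxZ scale0r. Qed.

Lemma cplx_eq0 (x : 'rV[R]_(n * 2)) : cplx x = 0 -> x = 0.
Proof. by rewrite -cplx0 => /cplx_inj. Qed.

Lemma realifyZ (c : C) (y : 'rV[C]_n) :
  realify (c *: y) = Re c *: realify y + Im c *: realify ('i *: y).
Proof.
apply: cplx_inj; rewrite cplxD !cplxZ !cplxK scalerA -scalerDl.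
by rewrite mulrC -complexE.
Qed.

End Realification.

Section ComplexLines.
Variables (R : realType) (n : nat).
Local Notation C := R[i].
Local Notation Re := (@complex.Re R).
Local Notation Im := (@complex.Im R).
Local Notation h := (@hform R n).
Local Notation cplx := (@cplx R n).
Local Notation realify := (@realify R n).

Definition is_line (W : 'M[R]_(n * 2)) (w : 'rV[C]_n) : Prop :=
  forall x : 'rV[R]_(n * 2), (x <= W)%MS <-> exists c : C, cplx x = c *: w.

Definition line_mx (w : 'rV[C]_n) : 'M[R]_(n * 2) :=
  (realify w + realify ('i *: w))%MS.

Lemma line_mxP (w : 'rV[C]_n) : is_line (line_mx w) w.
Proof.
move=> x; split.
  case/sub_addsmxP => [[u1 u2]] /= ->.
  rewrite (mx11_scalar u1) (mx11_scalar u2) !mul_scalar_mx.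
  exists ((u1 0 0)%:C + (u2 0 0)%:C * 'i).
  by rewrite cplxD !cplxZ !cplxK scalerA -scalerDl.
case=> c e; rewrite -(realifyK x) e realifyZ.
by apply: addmx_sub_adds; apply: scalemx_sub; apply: submx_refl.
Qed.

Lemma eqmx_mem m1 m2 (A : 'M[R]_(m1, n * 2)) (B : 'M[R]_(m2, n * 2)) :
  (forall x : 'rV[R]_(n * 2), (x <= A)%MS <-> (x <= B)%MS) -> (A == B)%MS.
Proof. by move=> H; apply/andP; split; apply/row_subP => i; apply/H; apply: row_sub. Qed.

Lemma is_line_eqmx (W : 'M[R]_(n * 2)) (w : 'rV[C]_n) :
  is_line W w -> (W == line_mx w)%MS.
Proof. by move=> hW; apply: eqmx_mem => x; rewrite hW line_mxP. Qed.

(* w and i w are real-independent, so a complex line is a real plane. *)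
Lemma rank_line_mx (w : 'rV[C]_n) : w != 0 -> \rank (line_mx w) = 2%N.
Proof.
move=> nw; rewrite /line_mx addsmxE.
suff /eqP : row_free (col_mx (realify w) (realify ('i *: w))) by [].
apply: inj_row_free => v.
rewrite -[v]hsubmxK mul_row_col (mx11_scalar (lsubmx v)) (mx11_scalar (rsubmx v)).
rewrite !mul_scalar_mx => /(congr1 cplx).
rewrite cplxD !cplxZ !cplxK cplx0 scalerA -scalerDl.
move/eqP; rewrite scaler_eq0 (negbTE nw) orbF => /eqP /(congr1 (fun c => (Re c, Im c))).
case; rewrite /= !(mulr0, mulr1, subr0, add0r, addr0) => a0 b0.
by rewrite a0 b0 !raddf0 row_mx0.
Qed.

Lemma in_perp_line (W : 'M[R]_(n * 2)) (w : 'rV[C]_n) : is_line W w ->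
  forall u, in_perp W u <-> h w (cplx u) = 0.
Proof.
move=> hW u; split => [hp|e y /hW [c ec]]; last by rewrite /omega_h ec hZl e mulr0.
have inW c : (realify (c *: w) <= W)%MS by apply/hW; exists c; rewrite cplxK.
have := hp _ (inW 1); have := hp _ (inW 'i).
rewrite /omega_h !cplxK scale1r hZl ImM Re_conj Im_conj /= => ei e1.
by apply: complex_ext => /=; lra.
Qed.

Lemma Lambda_line_mx (z : 'rV[C]_n) : z != 0 -> h z z = 0 -> Lambda (line_mx z).
Proof.
move=> nz hz; exists z; split => //; last exact: line_mxP.
by move=> c c'; rewrite hZl hZr hz !mulr0.
Qed.

Lemma Lambda_Iso2 (V : 'M[R]_(n * 2)) : Lambda V -> Iso2 V.
Proof.
case=> z [nz hz hV]; split.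
  by rewrite (eqmx_rank (is_line_eqmx hV)) rank_line_mx.
by move=> u v /hV [c eu] /hV [c' ev]; rewrite /omega_h eu ev hz.
Qed.

Lemma rank2_indep m (W : 'M[R]_(m, n * 2)) : \rank W = 2%N ->
  exists y1 y2 : 'rV[R]_(n * 2), [/\ (y1 <= W)%MS, (y2 <= W)%MS &
    forall r s : R, r *: y1 + s *: y2 = 0 -> r = 0 /\ s = 0].
Proof.
move=> rW.
have [k [B [ek fB sBW]]] : exists k (B : 'M[R]_(k, n * 2)),
    [/\ k = 2%N, row_free B & (B <= W)%MS].
  by exists (\rank W), (row_base W); rewrite row_base_free eq_row_base submx_refl.
subst k.
exists (row 0 B), (row 1 B); split; try exact: submx_trans (row_sub _ _) sBW.
move=> r s e.
have : \row_i (if i == 0 then r else s) *m B = 0.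
  rewrite mulmx_sum_row !big_ord_recr big_ord0 /= add0r !mxE /= -e.
  by congr (_ + _); congr (_ *: row _ _); apply: val_inj.
move/eqP; rewrite mulmx_free_eq0 // => /eqP /rowP u0.
by have := u0 0; have := u0 1; rewrite !mxE.
Qed.

End ComplexLines.

Section Antipodality.
Variables (R : realType) (n' : nat).
Local Notation N := n'.+2.
Local Notation C := R[i].
Local Notation Re := (@complex.Re R).
Local Notation Im := (@complex.Im R).
Local Notation h := (@hform R N).
Local Notation cplx := (@cplx R N).
Local Notation realify := (@realify R N).

(* Distinct points C z, C w of Lambda have d = h(w,z) <> 0 (null_orth_dep);
   then x = c z + (x - c z) with c = h(w,x)/d is the unique decomposition
   of x along C z and (C w)^perp. *)
Lemma Lambda_antipodal (V W : 'M[R]_(N * 2)) : Lambda V -> Lambda W ->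
  ~~ (V == W)%MS -> antipodal V W.
Proof.
case=> z [nz hz lz]; case=> w [nw hw lw] nVW.
have hz0 : h z z = 0 by have := hz 1 1; rewrite !scale1r.
have hw0 : h w w = 0 by have := hw 1 1; rewrite !scale1r.
have dnz : h w z != 0.
  apply: contra nVW => /eqP d0; have [k ek] := null_orth_dep nz hz0 hw0 d0.
  have knz : k != 0 by apply: contra nw => /eqP k0; rewrite ek k0 scale0r.
  apply: eqmx_mem => x; rewrite lz lw; split => -[c e].
    by exists (c / k); rewrite e ek scalerA mulfVK.
  by exists (c * k); rewrite e ek scalerA.
split.
  move=> x; pose c := h w (cplx x) / h w z.
  exists (realify (c *: z)), (x - realify (c *: z)); split.
  - by apply/lz; exists c; rewrite cplxK.
  - by apply/(in_perp_line lw); rewrite cplxB cplxK hBr hZr divfK // subrr.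
  - by rewrite addrC subrK.
move=> v /lz [c ev] /(in_perp_line lw); rewrite ev hZr => /eqP.
rewrite mulf_eq0 (negbTE dnz) orbF => /eqP c0.
by apply: cplx_eq0; rewrite ev c0 scale0r.
Qed.

(* The key step for maximality: a real plane spanned by Y1, Y2 on which h is
   real contains a nonzero x orthogonal to a nonzero null vector z.  If the
   real form r, s |-> h(r Y1 + s Y2) is isotropic take z = x; it is not
   negative definite (gram_disc_neg); if it is positive definite then N >= 3
   (gram_disc_pos2) and x = Y1 is orthogonal to a null vector (null_orth_pos). *)
Lemma null_orth_in_plane (Y1 Y2 : 'rV[C]_N) : Im (h Y1 Y2) = 0 ->
  (forall r s : R, r%:C *: Y1 + s%:C *: Y2 = 0 -> r = 0 /\ s = 0) ->
  exists r s z, [/\ (r != 0) || (s != 0), z != 0, h z z = 0 &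
                    h z (r%:C *: Y1 + s%:C *: Y2) = 0].
Proof.
move=> hi ind.
set A := Re (h Y1 Y1); set B := Re (h Y1 Y2); set D := Re (h Y2 Y2).
suff [hD|[z [nz hz hzY]]] : A * D <= B ^+ 2 \/
    exists z, [/\ z != 0, h z z = 0 & h z Y1 = 0].
- have [r [s [rs q0]]] := quad_isotropic hD.
  have x_null : h (r%:C *: Y1 + s%:C *: Y2) (r%:C *: Y1 + s%:C *: Y2) = 0.
    by rewrite hself_comb // -/A -/B -/D q0.
  exists r, s, (r%:C *: Y1 + s%:C *: Y2); split => //.
  by apply/eqP => /ind [r0 s0]; move: rs; rewrite r0 s0 eqxx.
- by exists 1, 0, z; rewrite oner_eq0 scale1r scale0r addr0.
have [Aneg|Apos|A0] := ltgtP A 0.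
- by left; apply: gram_disc_neg.
- have [n0|n1] : n' = 0%N \/ (1 <= n')%N by case: (n'); [left|right].
    by left; apply: gram_disc_pos2.
  by right; apply: null_orth_pos.
- by left; rewrite A0 mul0r sqr_ge0.
Qed.

(* Maximality: every W in Iso_2 fails to be antipodal to some point C z of
   Lambda, since W meets the omega_h-orthogonal of C z nontrivially. *)
Lemma Iso2_not_antipodal (W : 'M[R]_(N * 2)) : Iso2 W ->
  exists2 V, Lambda V & ~ antipodal W V.
Proof.
case=> rW iW; have [y1 [y2 [s1 s2 ind]]] := rank2_indep rW.
have indC r s : r%:C *: cplx y1 + s%:C *: cplx y2 = 0 -> r = 0 /\ s = 0.
  by rewrite -!cplxZ -cplxD => /cplx_eq0 /ind.
have [r [s [z [rs nz hz hzx]]]] := null_orth_in_plane (iW _ _ s1 s2) indC.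
exists (line_mx z); first exact: Lambda_line_mx.
case=> _ uniq; have [r0 s0] : r = 0 /\ s = 0.
  apply: ind; apply: uniq; first by rewrite addmx_sub // scalemx_sub.
  by apply/(in_perp_line (line_mxP z)); rewrite cplxD !cplxZ.
by move: rs; rewrite r0 s0 eqxx.
Qed.

End Antipodality.

Theorem mainTheorem15 (R : realType) (n : nat) (hn : (2 <= n)%N) :
  maximally_antipodal (@Lambda R n).
Proof.
case: n hn => [|[|n']] // _; split.
- exact: Lambda_Iso2.
- exact: Lambda_antipodal.
- exact: Iso2_not_antipodal.
Qed.
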